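(* Let $G$ be a finite, simple, connected graph and $k\ge 0$. If $G$ contains a $k$-supported cycle, then $W(G)\ge k-4$.
   Context: For a vertex $r$ of $G$ (the root) and $x\in V(G)$, let $\ell_r(x)=d_G(r,x)$. For an integer $n\ge 0$, let $R_r(n)$ be the set of edges $xy\in E(G)$ with $\max\{\ell_r(x),\ell_r(y)\}>n$, and write $x\simeq_n y$ if $x$ and $y$ lie in the same connected component of $(V(G),R_r(n))$ (in particular $x\simeq_n x$). Define $W(r)=\max_{n\ge 0}\max\{d_G(x,y): \ell_r(x)=\ell_r(y)=n,\ x\simeq_n y\}$ and $W(G)=\max_{r\in V(G)}W(r)$. A cycle $C$ in $G$ is $k$-supported if it can be partitioned into three edge-disjoint paths $I_1,I_2,I_3$, with $I_1\cap I_2$, $I_2\cap I_3$, $I_3\cap I_1$ each a single vertex, such that for all $u_i\in V(I_i)$ ($i=1,2,3$), $\max_{i,j} d_G(u_i,u_j)\ge k$. *)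

From mathcomp Require Import all_boot.
Set Implicit Arguments. Unset Strict Implicit. Unset Printing Implicit Defensive.

Section Graph.
Variables (T : finType) (e : rel T).

Definition simple_graph : Prop := symmetric e /\ irreflexive e.
Definition connected_graph : Prop := forall x y : T, connect e x y.

Fixpoint reach (n : nat) (x y : T) : bool :=
  if n is n'.+1 then reach n' x y || [exists z, reach n' x z && e z y]
  else x == y.

(* graph distance d_G(x,y): least n with a walk of length <= n;
   (in a connected graph this is attained below #|T|) *)
Definition dist (x y : T) : nat := find (fun n => reach n x y) (iota 0 #|T|).

Definition lvl (r x : T) : nat := dist r x.

Definition Rrel (r : T) (n : nat) : rel T :=
  fun x y => e x y && (n < maxn (lvl r x) (lvl r y)).

Definition simn (r : T) (n : nat) (x y : T) : bool := connect (Rrel r n) x y.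

Definition Wr (r : T) : nat :=
  \max_(p : T * T | (lvl r p.1 == lvl r p.2) && simn r (lvl r p.1) p.1 p.2)
     dist p.1 p.2.

Definition WG : nat := \max_(r : T) Wr r.

(* A partition into three edge-disjoint paths pairwise meeting in exactly one
   vertex is given (after rotating c so that I3 and I1 meet at c_0) by
   breakpoints 0 < i < j < m:
     I1 = c_0 .. c_i,  I2 = c_i .. c_j,  I3 = c_j .. c_{m-1}, c_0. *)
Definition is_cycle (c : seq T) : bool := [&& uniq c, 3 <= size c & cycle e c].

Definition arc1 (c : seq T) (i : nat) : seq T := take i.+1 c.
Definition arc2 (c : seq T) (i j : nat) : seq T := drop i (take j.+1 c).
Definition arc3 (c : seq T) (j : nat) : seq T := drop j c ++ take 1 c.

Definition k_supported_cycle (k : nat) (c : seq T) : Prop :=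
  is_cycle c /\
  exists i j : nat, [/\ 0 < i, i < j, j < size c &
    (forall u1 u2 u3 : T, u1 \in arc1 c i -> u2 \in arc2 c i j -> u3 \in arc3 c j ->
      k <= maxn (dist u1 u2) (maxn (dist u2 u3) (dist u1 u3)))].

End Graph.

From mathcomp Require Import all_boot.
Set Implicit Arguments. Unset Strict Implicit. Unset Printing Implicit Defensive.

(* We prove the stronger bound  k <= W(G) + 1.  Root the level structure at
   the vertex r where the arcs I1 and I3 of the k-supported cycle meet.
   Taking u1 = u3 = r in the support condition shows that every vertex of
   I2 lies at level >= k from r.  Let u be a vertex of I2 of minimum level
   n+1 >= k; then all of I2 lies strictly above level n.  Walking along the
   cycle from r to u through I1, the last vertex at level <= n is a vertex
   x of I1 on level n that is ~_n-equivalent to u; symmetrically, walking from u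
   back to r through I3 yields such a vertex y of I3.  Together with a
   neighbour w of u at level n, the points x, w, y lie on level n in the
   ~_n-class of u, so their pairwise distances are at most W(G), and hence
   d(x,u), d(u,y), d(x,y) <= W(G) + 1, giving k <= W(G) + 1.
   The file first develops bounded walks and graph distance, then level
   crossings along walks and along a cycle through the root, then the bound
   of W(G) on a level class, and finally derives the theorem. *)

Section Walks.
Variables (T : finType) (e : rel T).

Lemma reachS n x y : reach e n x y -> reach e n.+1 x y.
Proof. by move=> H /=; rewrite H. Qed.

Lemma reach_edge n x y z : reach e n x y -> e y z -> reach e n.+1 x z.
Proof. by move=> Hxy Hyz /=; apply/orP; right; apply/existsP; exists y; rewrite Hxy. Qed.

Lemma reach1 x y : e x y -> reach e 1 x y.
Proof. by apply: reach_edge; rewrite /= eqxx. Qed.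

Lemma reach_cat m n x y z : reach e m x y -> reach e n y z -> reach e (m + n) x z.
Proof.
move=> Hxy; elim: n z => [|n IH] z /=; first by move/eqP=> <-; rewrite addn0.
rewrite addnS; case/orP=> [Hyz|/existsP[w /andP[Hyw Hwz]]].
  exact/reachS/IH.
exact: reach_edge (IH _ Hyw) Hwz.
Qed.

Lemma reach_sym : symmetric e -> forall n x y, reach e n x y -> reach e n y x.
Proof.
move=> se; elim=> [|n IH] x y; first by move=> /= /eqP->.
case/orP=> [Hxy|/existsP[z /andP[Hxz Hzy]]]; first exact/reachS/IH.
by rewrite -[n.+1]add1n; apply: reach_cat (IH _ _ Hxz); apply: reach1; rewrite se.
Qed.

Lemma reach_path x p : path e x p -> reach e (size p) x (last x p).
Proof.
elim: p x => [|y p IH] x; first by rewrite /= eqxx.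
move=> /= /andP[Hxy Hp]; change (reach e (1 + size p) x (last y p)).
exact: reach_cat (reach1 Hxy) (IH _ Hp).
Qed.

Lemma dist_le n x y : reach e n x y -> dist e x y <= n.
Proof.
move=> Hn; rewrite leqNgt; apply/negP => Hlt.
have Hsize := find_size (fun m => reach e m x y) (iota 0 #|T|).
rewrite size_iota in Hsize.
have := before_find 0 Hlt; rewrite nth_iota ?add0n ?Hn //.
exact: leq_trans Hlt Hsize.
Qed.

(* ... and, in a connected graph, it is realised by a walk, since a shortest
   path has fewer than #|T| steps. *)
Lemma dist_reach x y : connected_graph e -> reach e (dist e x y) x y.
Proof.
move=> cg; have /connectP[p pp ->] := cg x y.
case: (shortenP pp) => p' pp' up' _.
have Hsize : size p' < #|T|.
  by have := max_card (mem (x :: p')); move/card_uniqP: up' => ->.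
have Hhas : has (fun m => reach e m x (last x p')) (iota 0 #|T|).
  by apply/hasP; exists (size p'); rewrite ?mem_iota ?add0n // reach_path.
have := Hhas; rewrite has_find size_iota => Hfind.
by have := nth_find 0 Hhas; rewrite nth_iota.
Qed.

End Walks.

Section Levels.
Variables (T : finType) (e : rel T).
Hypotheses (se : symmetric e) (cg : connected_graph e).

Lemma dist_triangle x y z : dist e x z <= dist e x y + dist e y z.
Proof. exact/dist_le/reach_cat/dist_reach/cg/dist_reach. Qed.

Lemma dist_sym x y : dist e y x = dist e x y.
Proof. by apply/eqP; rewrite eqn_leq !dist_le // reach_sym // dist_reach. Qed.

Lemma dist_xx x : dist e x x = 0.
Proof. by apply/eqP; rewrite -leqn0 dist_le //= eqxx. Qed.

Lemma dist_edge x y : e x y -> dist e x y <= 1.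
Proof. by move=> Hxy; apply/dist_le/reach1. Qed.

Lemma lvl_edge r x y : e x y -> lvl e r y <= (lvl e r x).+1.
Proof.
move=> Hxy; apply: leq_trans (dist_triangle r x y) _.
by rewrite -addn1 leq_add2l dist_edge.
Qed.

Lemma lvl_pred r v n : lvl e r v = n.+1 -> exists2 w, e w v & lvl e r w = n.
Proof.
move=> Hv; have := dist_reach r v cg; rewrite -/(lvl e r v) Hv /=.
case/orP=> [Hrv|/existsP[w /andP[Hrw Hwv]]].
  by have := dist_le Hrv; rewrite -/(lvl e r v) Hv ltnn.
exists w => //; apply/eqP; rewrite eqn_leq dist_le //=.
by have := lvl_edge r Hwv; rewrite Hv ltnS.
Qed.

Lemma Rrel_above r n x y : e x y -> n < lvl e r x \/ n < lvl e r y -> Rrel e r n x y.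
Proof. by move=> Hxy Habove; rewrite /Rrel Hxy leq_max; apply/orP. Qed.

Lemma simn_sym r n x y : simn e r n x y = simn e r n y x.
Proof. by apply: sym_connect_sym => a b; rewrite /Rrel se maxnC. Qed.

Lemma walk_up r n x0 s : path e x0 s ->
  lvl e r x0 <= n -> n < lvl e r (last x0 s) ->
  exists2 x, x \in x0 :: s & lvl e r x = n /\ simn e r n x (last x0 s).
Proof.
elim/last_ind: s => [|s z IH].
  by move=> _ Hle Hlt; have := leq_ltn_trans Hle Hlt; rewrite ltnn.
rewrite rcons_path last_rcons => /andP[Hs Hyz] Hx0 Hz.
have Ryz : Rrel e r n (last x0 s) z by apply: Rrel_above => //; right.
have sub v : v \in x0 :: s -> v \in x0 :: rcons s z.
  by rewrite -rcons_cons mem_rcons inE => ->; rewrite orbT.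
case: (leqP (lvl e r (last x0 s)) n) => Hy.
  exists (last x0 s); first exact/sub/mem_last.
  split; last exact: connect1.
  by apply/eqP; rewrite eqn_leq Hy -ltnS (leq_trans Hz) // lvl_edge.
have [x Hx [Hlx Hxy]] := IH Hs Hx0 Hy.
by exists x; [exact: sub | split=> //; apply: connect_trans Hxy (connect1 Ryz)].
Qed.

Lemma walk_down r n x0 s : path e x0 s ->
  n < lvl e r x0 -> lvl e r (last x0 s) <= n ->
  exists2 x, x \in x0 :: s & lvl e r x = n /\ simn e r n x0 x.
Proof.
elim: s x0 => [|y s IH] x0.
  by move=> _ Hlt Hle; have := leq_trans Hlt Hle; rewrite ltnn.
rewrite /= => /andP[Hx0y Hs] Hx0 Hlast.
have Rx0y : Rrel e r n x0 y by apply: Rrel_above => //; left.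
case: (leqP (lvl e r y) n) => Hy.
  exists y; first by rewrite !inE eqxx orbT.
  split; last exact: connect1.
  by apply/eqP; rewrite eqn_leq Hy -ltnS (leq_trans Hx0) // lvl_edge // se.
have [x Hx [Hlx Hyx]] := IH _ Hs Hy Hlast.
by exists x; [rewrite inE Hx orbT | split=> //; apply: connect_trans (connect1 Rx0y) Hyx].
Qed.

Lemma cycle_crossing r n P Q S u :
  cycle e (r :: P ++ Q ++ S) -> u \in Q -> {in Q, forall v, n < lvl e r v} ->
  exists x y, [/\ x \in r :: P, y \in rcons S r, lvl e r x = n, lvl e r y = n
                & simn e r n x u /\ simn e r n u y].
Proof.
move=> cyc Qu Qabove; case/splitPr: Qu cyc Qabove => a b cyc Qabove.
have Hr : lvl e r r = 0 by rewrite /lvl dist_xx.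
have Hu : n < lvl e r u by apply: Qabove; rewrite mem_cat mem_head orbT.
have split_cycle : rcons (P ++ (a ++ u :: b) ++ S) r = rcons (P ++ a) u ++ rcons (b ++ S) r.
  by rewrite -!cats1 -!catA.
move: cyc; rewrite /= split_cycle cat_path last_rcons => /andP[Hup Hdown].
have [x Hx [Hlx Hxu]] : exists2 x, x \in r :: rcons (P ++ a) u &
    lvl e r x = n /\ simn e r n x u.
  by have := walk_up (r := r) (n := n) Hup; rewrite last_rcons Hr; apply.
have [y Hy [Hly Huy]] : exists2 y, y \in u :: rcons (b ++ S) r &
    lvl e r y = n /\ simn e r n u y.
  by apply: walk_down; rewrite ?last_rcons ?Hr.
have not_in_Q v : lvl e r v = n -> v \in a ++ u :: b -> False.
  by move=> Hlv /Qabove; rewrite Hlv ltnn.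
exists x, y; split=> //.
- move: Hx; rewrite -cats1 -catA -cat_cons mem_cat => /orP[//|Hx].
  by case: (not_in_Q x Hlx); move: Hx; rewrite !mem_cat !inE => /orP[->|->]; rewrite ?orbT.
- move: Hy; rewrite rcons_cat -cat_cons mem_cat => /orP[Hy|//].
  by case: (not_in_Q y Hly); rewrite mem_cat Hy orbT.
Qed.

Lemma level_class_bound r n x y :
  lvl e r x = n -> lvl e r y = n -> simn e r n x y -> dist e x y <= WG e.
Proof.
move=> Hx Hy Hxy; apply: leq_trans (leq_bigmax (F := Wr e) r).
apply: (@leq_bigmax_cond _ _ (fun p : T * T => dist e p.1 p.2) (x, y)).
by rewrite /= Hx Hy eqxx Hxy.
Qed.

(* If x and y lie on level n in the ~_n-class of a vertex u on level n+1,
   then x, u, y are pairwise within distance W(G) + 1: route through a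
   neighbour w of u on level n, which lies in the same class. *)
Lemma spread_bound r n x u y :
  lvl e r x = n -> lvl e r y = n -> lvl e r u = n.+1 ->
  simn e r n x u -> simn e r n u y ->
  maxn (dist e x u) (maxn (dist e u y) (dist e x y)) <= (WG e).+1.
Proof.
move=> Hx Hy Hu Hxu Huy.
have [w Hwu Hw] := lvl_pred Hu.
have Hwu_sim : simn e r n w u.
  by apply/connect1/Rrel_above => //; right; rewrite Hu.
have Huw : simn e r n u w by rewrite simn_sym.
have Hxw := level_class_bound Hx Hw (connect_trans Hxu Huw).
have Hwy := level_class_bound Hw Hy (connect_trans Hwu_sim Huy).
have Hxy := level_class_bound Hx Hy (connect_trans Hxu Huy).
have Hwu1 := dist_edge Hwu.
rewrite !geq_max (leq_trans Hxy) // andbT; apply/andP; split.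
- by apply: leq_trans (dist_triangle x w u) _; rewrite -addn1 leq_add.
- apply: leq_trans (dist_triangle u w y) _; rewrite -add1n leq_add //.
  by rewrite dist_sym.
Qed.

End Levels.

Section Arcs.
Variable T : finType.

Lemma arcs_decomp (c : seq T) i j : i <= j -> c = take i c ++ arc2 c i j ++ drop j.+1 c.
Proof.
move=> ij; rewrite /arc2 catA -(take_takel c (leqW ij)).
by rewrite !cat_take_drop.
Qed.

Lemma take_sub_arc1 (c : seq T) i x : x \in take i c -> x \in arc1 c i.
Proof. by rewrite -(take_takel c (leqnSn i)) => /mem_take. Qed.

Lemma closing_sub_arc3 (r : T) s j x : j < size (r :: s) ->
  x \in rcons (drop j.+1 (r :: s)) r -> x \in arc3 (r :: s) j.
Proof.
move=> js; rewrite /arc3 (drop_nth r js) mem_rcons mem_cat /= !inE.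
by case/orP=> ->; rewrite ?orbT.
Qed.

End Arcs.

Theorem mainTheorem4 (T : finType) (e : rel T) (k : nat) :
  simple_graph e -> connected_graph e ->
  (exists c : seq T, k_supported_cycle e k c) ->
  k - 4 <= WG e.
Proof.
move=> [se _] cg [c [/and3P[_ _ cyc] [i [j [i_gt0 ij js supp]]]]].
case: c cyc js supp => [//|r s] cyc js supp.
have [i' Ei] : exists i', i = i'.+1 by exists i.-1; rewrite prednK.
subst i; set Q := arc2 (r :: s) i'.+1 j.
have r_arc1 : r \in arc1 (r :: s) i'.+1 by rewrite mem_head.
have r_arc3 : r \in arc3 (r :: s) j by rewrite /arc3 mem_cat mem_head orbT.
(* Taking u1 = u3 = r: all of I2 lies at level >= k from r. *)
have Q_high v : v \in Q -> k <= lvl e r v.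
  move=> Qv; have := supp _ _ _ r_arc1 Qv r_arc3.
  by rewrite (dist_sym se cg r v) dist_xx maxn0 maxnn.
have Q0 : nth r Q 0 \in Q.
  by rewrite mem_nth // size_drop size_takel // subn_gt0 ltnS ltnW.
case: (arg_minnP (lvl e r) Q0) => u Qu u_min.
case Hu : (lvl e r u) => [|n].
  by have := Q_high _ Qu; rewrite Hu leqn0 => /eqP->.
have Q_above : {in Q, forall v, n < lvl e r v} by move=> v /u_min; rewrite Hu.
have cycQ : cycle e (take i'.+1 (r :: s) ++ Q ++ drop j.+1 (r :: s)).
  by rewrite -arcs_decomp // ltnW.
have [x [y [Px Sy Hx Hy [Hxu Huy]]]] := cycle_crossing se cg cycQ Qu Q_above.
have x_arc1 := take_sub_arc1 (c := r :: s) (i := i'.+1) Px.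
have := supp _ _ _ x_arc1 Qu (closing_sub_arc3 js Sy).
move/leq_trans/(_ (spread_bound se cg Hx Hy Hu Hxu Huy)) => k_bound.
by rewrite leq_subLR (leq_trans k_bound) // addnC -addn1 leq_add2l.
Qed.
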